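(* Let $\bm{A}=[\bm{A}_1\ \bm{A}_2]\in\mathbb{R}^{m\times n}$ with $\bm{A}_j\in\mathbb{R}^{m\times n_j}$, $n=n_1+n_2$, have full column rank, and suppose $\bm{A}_1^\top\bm{A}_1=\bm{I}_{n_1}$, $\bm{A}_2^\top\bm{A}_2=\bm{I}_{n_2}$ and $\bm{A}_2^\top\bm{A}_1\neq 0$. Then $\rho_{\mathrm{BGD}}^*\le(\rho_{\mathrm{HB}}^* )^2$.
   Context: $\rho(\cdot)$ denotes the spectral radius (maximum modulus of eigenvalues). For $\gamma_1,\gamma_2>0$ let $\bm{M}(\gamma_1,\gamma_2):=\left(\bm{I}-\begin{bmatrix}0&0\\ \gamma_2\bm{A}_2^\top\bm{A}_1&\gamma_2\bm{A}_2^\top\bm{A}_2\end{bmatrix}\right)\left(\bm{I}-\begin{bmatrix}\gamma_1\bm{A}_1^\top\bm{A}_1&\gamma_1\bm{A}_1^\top\bm{A}_2\\0&0\end{bmatrix}\right)$, the iteration matrix of two-block gradient descent ($\bm{x}_1^+=\bm{x}_1-\gamma_1\bm{A}_1^\top(\bm{A}\bm{x}-\bm{y})$, then $\bm{x}_2^+=\bm{x}_2-\gamma_2\bm{A}_2^\top(\bm{A}_1\bm{x}_1^++\bm{A}_2\bm{x}_2-\bm{y})$) on $F(\bm{x})=\frac12\|\bm{A}\bm{x}-\bm{y}\|_2^2$. Define $\rho_{\mathrm{BGD}}^*:=\min_{\gamma_1>0,\gamma_2>0}\rho(\bm{M}(\gamma_1,\gamma_2))$. For $\alpha>0,\beta\ge0$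 let $\bm{N}(\alpha,\beta):=\begin{bmatrix}0&\bm{I}\\-\beta\bm{I}&(1+\beta)\bm{I}-\alpha\bm{A}^\top\bm{A}\end{bmatrix}$ (heavy-ball iteration matrix) and $\rho_{\mathrm{HB}}^*:=\min_{\alpha>0,\beta\ge0}\rho(\bm{N}(\alpha,\beta))$. *)

From HB Require Import structures.
From mathcomp Require Import all_boot all_order all_algebra.
From mathcomp Require Import complex.
From mathcomp Require Import classical_sets reals.
Set Implicit Arguments. Unset Strict Implicit. Unset Printing Implicit Defensive.
Import Order.TTheory GRing.Theory Num.Theory.
Local Open Scope ring_scope.
Local Open Scope classical_set_scope.

Definition cplx_mx (R : realType) (k : nat) (B : 'M[R]_k) : 'M[R[i]]_k :=
  map_mx (fun x => (x%:C)%C) B.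

Definition spec_rad (R : realType) (k : nat) (B : 'M[R]_k) : R :=
  sup [set r : R | exists lam : R[i],
         eigenvalue (cplx_mx B) lam /\ r = ComplexField.Normc.normc lam].

Definition M_BGD (R : realType) (m n1 n2 : nat)
  (A1 : 'M[R]_(m, n1)) (A2 : 'M[R]_(m, n2)) (g1 g2 : R) : 'M[R]_(n1 + n2) :=
  (1%:M - block_mx 0 0 (g2 *: (A2^T *m A1)) (g2 *: (A2^T *m A2)))
  *m (1%:M - block_mx (g1 *: (A1^T *m A1)) (g1 *: (A1^T *m A2)) 0 0).

Definition N_HB (R : realType) (m n : nat) (A : 'M[R]_(m, n)) (a b : R)
  : 'M[R]_(n + n) :=
  block_mx 0 1%:M (- b%:M) ((1 + b)%:M - a *: (A^T *m A)).

Definition rho_BGD_star (R : realType) (m n1 n2 : nat)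
  (A1 : 'M[R]_(m, n1)) (A2 : 'M[R]_(m, n2)) : R :=
  inf [set r : R | exists g1 g2 : R, 0 < g1 /\ 0 < g2 /\
         r = spec_rad (M_BGD A1 A2 g1 g2)].

Definition rho_HB_star (R : realType) (m n : nat) (A : 'M[R]_(m, n)) : R :=
  inf [set r : R | exists a b : R, 0 < a /\ 0 <= b /\ r = spec_rad (N_HB A a b)].

From HB Require Import structures.
From mathcomp Require Import all_boot all_order all_algebra.
From mathcomp Require Import complex.
From mathcomp Require Import boolp classical_sets reals.
From mathcomp Require Import ring lra.
Import Order.TTheory GRing.Theory Num.Theory.
Local Open Scope ring_scope.
Local Open Scope complex_scope.

(* Let B = A2^T A1 and let S be the largest eigenvalue of B^T B; since both
   blocks are orthonormal, 0 <= S <= 1.  Take both step sizes equal to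
   om = 2 / (1 + sqrt (1 - S)) and put r = sqrt S / (1 + sqrt (1 - S)), so that
   om - 1 = r^2.  Eliminating the first block from an eigenvector of M(om, om)
   shows that each eigenvalue mu satisfies (mu + om - 1)^2 = om^2 kap mu for some
   kap in [0, S], which forces |mu| <= om - 1 = r^2.
   Conversely, A^T A has the eigenvalues 1 - sqrt S and 1 + sqrt S, and every
   eigenvalue lam of A^T A makes the roots of mu^2 - (1 + beta - alpha lam) mu + beta
   eigenvalues of N(alpha, beta).  If all these roots had modulus < r, the
   Schur-Cohn conditions for the two values of lam would contradict each other;
   hence rho(N(alpha, beta)) >= r for all alpha, beta. *)

Section SpectralRadius.
Context {R : realType}.
Local Notation normc := (@ComplexField.Normc.normc R).

Lemma normc_ge0 (z : R[i]) : 0 <= normc z.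
Proof. by case: z => a b; rewrite /= sqrtr_ge0. Qed.

Lemma eigenvalue_finite {k} (G : 'M[R[i]]_k) :
  exists rs : seq R[i], forall l, eigenvalue G l -> l \in rs.
Proof.
have [rs Hrs] := closed_field_poly_normal (char_poly G).
exists rs => l; rewrite eigenvalue_root_char Hrs rootZ ?root_prod_XsubC //.
by rewrite (monicP (char_poly_monic G)) oner_neq0.
Qed.

Lemma eigenvalue_argmax {k} {G : 'M[R[i]]_k} (F : R[i] -> R) {l0} :
  eigenvalue G l0 ->
  exists2 l, eigenvalue G l & forall l', eigenvalue G l' -> F l' <= F l.
Proof.
have [rs Grs] := eigenvalue_finite G => Gl0.
pose P (i : 'I_(size rs)) := eigenvalue G (nth 0 rs i).
have l0rs : (index l0 rs < size rs)%N by rewrite index_mem Grs.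
have Pi0 : P (Ordinal l0rs) by rewrite /P nth_index ?Grs.
case: (arg_maxP (fun i : 'I_(size rs) => F (nth 0 rs i)) Pi0) => i Pi Fi.
exists (nth 0 rs i) => // l' Gl'.
have l'rs : (index l' rs < size rs)%N by rewrite index_mem Grs.
by have := Fi (Ordinal l'rs); rewrite /P /= nth_index ?Grs //; apply.
Qed.

Lemma normc_le_spec_rad {k} {B : 'M[R]_k} {lam} :
  eigenvalue (cplx_mx B) lam -> normc lam <= spec_rad B.
Proof.
move=> Blam; apply: sup_upper_bound; last by exists lam.
split; first by exists (normc lam), lam.
have [rs Brs] := eigenvalue_finite (cplx_mx B).
exists (\sum_(l <- rs) normc l) => _ [l [Bl ->]].
rewrite (big_rem l) ?Brs //= lerDl sumr_ge0 // => *; exact: normc_ge0.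
Qed.

Lemma spec_rad_ge0 {k} (B : 'M[R]_k) : 0 <= spec_rad B.
Proof.
rewrite /spec_rad; set E := (X in sup X).
have [[_ [l [Bl _]]]|nE] := pselect (E !=set0)%classic; last by rewrite sup_out // => -[].
exact: le_trans (normc_ge0 l) (normc_le_spec_rad Bl).
Qed.

Lemma spec_rad_le {k} (B : 'M[R]_k) x : 0 <= x ->
  (forall lam, eigenvalue (cplx_mx B) lam -> normc lam <= x) -> spec_rad B <= x.
Proof.
move=> x0 Bx; rewrite /spec_rad; set E := (X in sup X).
have [nE|nE] := pselect (E !=set0)%classic; last by rewrite sup_out // => -[].
by apply: ge_sup => // _ [l [Bl ->]]; exact: Bx.
Qed.

End SpectralRadius.

Section RealSymmetric.
Context {R : realType} {k : nat}.
Implicit Types (v : 'rV[R]_k) (z : 'rV[R[i]]_k) (C : 'M[R]_k).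

Lemma Re_sum (I : Type) (r : seq I) (P : pred I) (F : I -> R[i]) :
  complex.Re (\sum_(i <- r | P i) F i) = \sum_(i <- r | P i) complex.Re (F i).
Proof. exact: (raddf_sum (@complex.Re R : Rcomplex R -> R)). Qed.

Lemma Im_sum (I : Type) (r : seq I) (P : pred I) (F : I -> R[i]) :
  complex.Im (\sum_(i <- r | P i) F i) = \sum_(i <- r | P i) complex.Im (F i).
Proof. exact: (raddf_sum (@complex.Im R : Rcomplex R -> R)). Qed.

Lemma Re_mulmx z C :
  map_mx (@complex.Re R) (z *m cplx_mx C) = map_mx (@complex.Re R) z *m C.
Proof.
apply/rowP => j; rewrite !mxE Re_sum; apply: eq_bigr => i _.
by rewrite !mxE; case: (z 0 i) => a b /=; rewrite mulr0 subr0.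
Qed.

Lemma Im_mulmx z C :
  map_mx (@complex.Im R) (z *m cplx_mx C) = map_mx (@complex.Im R) z *m C.
Proof.
apply/rowP => j; rewrite !mxE Im_sum; apply: eq_bigr => i _.
by rewrite !mxE; case: (z 0 i) => a b /=; rewrite mulr0 add0r.
Qed.

Lemma Re_scalemx (kap : R[i]) z :
  map_mx (@complex.Re R) (kap *: z) =
  complex.Re kap *: map_mx (@complex.Re R) z - complex.Im kap *: map_mx (@complex.Im R) z.
Proof. by apply/rowP => j; rewrite !mxE; case: kap; case: (z 0 j). Qed.

Lemma Im_scalemx (kap : R[i]) z :
  map_mx (@complex.Im R) (kap *: z) =
  complex.Re kap *: map_mx (@complex.Im R) z + complex.Im kap *: map_mx (@complex.Re R) z.
Proof. by apply/rowP => j; rewrite !mxE; case: kap; case: (z 0 j) => a b c d /=; ring. Qed.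

Lemma complex_row_eq0 z :
  map_mx (@complex.Re R) z = 0 -> map_mx (@complex.Im R) z = 0 -> z = 0.
Proof.
move=> /rowP Rez /rowP Imz; apply/rowP => j.
by move: (Rez j) (Imz j); rewrite !mxE; case: (z 0 j) => a b /= -> ->.
Qed.

Lemma dotmx_self_ge0 v : 0 <= (v *m v^T) 0 0.
Proof. by rewrite !mxE sumr_ge0 // => i _; rewrite mxE -expr2 sqr_ge0. Qed.

Lemma dotmx_self_eq0 v : ((v *m v^T) 0 0 == 0) = (v == 0).
Proof.
apply/eqP/eqP => [|->]; last by rewrite mul0mx mxE.
rewrite !mxE => /eqP; rewrite psumr_eq0 => [/allP v0|i _]; last first.
  by rewrite mxE -expr2 sqr_ge0.
apply/rowP => j; move/implyP: (v0 j (mem_index_enum j)) => /(_ isT).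
by rewrite !mxE -expr2 sqrf_eq0 => /eqP.
Qed.

Lemma symmetric_eigenvalue_real {C} {kap : R[i]} : C^T = C ->
  eigenvalue (cplx_mx C) kap ->
  kap = (complex.Re kap)%:C /\ exists2 v : 'rV_k, v != 0 & v *m C = complex.Re kap *: v.
Proof.
move=> Csym /eigenvalueP[z zC z0].
set u := map_mx (@complex.Re R) z; set w := map_mx (@complex.Im R) z.
set a := complex.Re kap; set b := complex.Im kap.
have uC : u *m C = a *: u - b *: w by rewrite -Re_mulmx zC Re_scalemx.
have wC : w *m C = a *: w + b *: u by rewrite -Im_mulmx zC Im_scalemx.
have b_norm : b * ((u *m u^T) 0 0 + (w *m w^T) 0 0) = 0.
  have : u *m C *m w^T = u *m (w *m C)^T by rewrite trmx_mul Csym mulmxA.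
  rewrite uC wC mulmxBl linearD /= !linearZ /= mulmxDr -!scalemxAl -!scalemxAr.
  by move=> /(congr1 (fun M : 'M[R]_1 => M 0 0)); rewrite !mxE => E; lra.
have b0 : b = 0.
  apply: contra_neq_eq z0 => bn0.
  have norms0 : (u *m u^T) 0 0 + (w *m w^T) 0 0 = 0.
    by move/eqP: b_norm; rewrite mulf_eq0 (negbTE bn0) => /eqP.
  have := dotmx_self_ge0 u; have := dotmx_self_ge0 w => w_ge0 u_ge0.
  by apply: complex_row_eq0; apply/eqP; rewrite -dotmx_self_eq0; apply/eqP; lra.
split; first by apply/eqP; rewrite eq_complex /= -/a -/b b0 !eqxx.
have [u0|un0] := eqVneq u 0; last first.
  by exists u; rewrite // uC b0 scale0r subr0.
exists w; last by rewrite wC b0 scale0r addr0.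
by apply: contra_neq z0 => w0; apply: complex_row_eq0.
Qed.

End RealSymmetric.

Section ComplexQuadratics.
Context {R : rcfType}.
Local Notation normc := (@ComplexField.Normc.normc R).

Lemma normc_real (x : R) : normc x%:C = `|x|.
Proof. by rewrite /= expr0n /= addr0 sqrtr_sqr. Qed.

Lemma normc_le_shift_sqr {d t : R} {mu : R[i]} : 0 <= t <= 4 * d ->
  (mu + d%:C) ^+ 2 = t%:C * mu -> normc mu <= d.
Proof.
case/andP=> t_ge0 t_le; case: mu => a b /eqP; rewrite eq_complex /= !mul0r.
rewrite !(addr0, subr0, mulr0, add0r) => /andP[/eqP re /eqP im].
have d_ge0 : 0 <= d by lra.
rewrite -(ger0_norm d_ge0) -sqrtr_sqr ler_wsqrtr //.
have [b0|bn0] := eqVneq b 0; last first.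
  have ad : (a + d) * 2 = t by apply: (mulIf bn0); lra.
  nra.
rewrite b0 in re *.
have : (2 * a - t + 2 * d) ^+ 2 <= 0 by nra.
rewrite le_eqVlt ltNge sqr_ge0 orbF sqrf_eq0 => /eqP ?.
nra.
Qed.

Lemma quadratic_roots_in_disk {p b r : R} : 0 <= b -> 0 < r ->
  (forall mu : R[i], mu ^+ 2 - p%:C * mu + b%:C = 0 -> normc mu < r) ->
  b < r ^+ 2 /\ r * `|p| < r ^+ 2 + b.
Proof.
move=> b_ge0 r_gt0 roots_lt.
have [disc_ge0|disc_lt0] := leP (4 * b) (p ^+ 2).
  set s := Num.sqrt (p ^+ 2 - 4 * b).
  have s_sqr : s ^+ 2 = p ^+ 2 - 4 * b by rewrite sqr_sqrtr // subr_ge0.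
  have real_root_lt x : x ^+ 2 - p * x + b = 0 -> - r < x < r.
    move=> qx; rewrite -ltr_norml -normc_real roots_lt //.
    by rewrite -rmorphXn -rmorphM -rmorphB -rmorphD qx.
  have /andP[? ?] := real_root_lt ((p + s) / 2) ltac:(nra).
  have /andP[? ?] := real_root_lt ((p - s) / 2) ltac:(nra).
  have -> : r * `|p| = `|r * p| by rewrite normrM gtr0_norm.
  rewrite ltr_norml.
  split; [|apply/andP; split]; nra.
set s := Num.sqrt (4 * b - p ^+ 2).
have s_sqr : s ^+ 2 = 4 * b - p ^+ 2 by rewrite sqr_sqrtr // subr_ge0 ltW.
have root : (p / 2 +i* (s / 2)) ^+ 2 - p%:C * (p / 2 +i* (s / 2)) + b%:C = 0.
  by apply/eqP; rewrite eq_complex /=; apply/andP; split; apply/eqP; nra.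
have := roots_lt _ root; rewrite /=.
have -> : (p / 2) ^+ 2 + (s / 2) ^+ 2 = b by nra.
set t := Num.sqrt b => t_lt_r.
have t_sqr : t ^+ 2 = b by rewrite sqr_sqrtr.
have t_ge0 : 0 <= t := sqrtr_ge0 b.
have p_lt : `|p| < 2 * t.
  by rewrite ltNge; apply/negP => ?; have := real_normK (num_real p); have := normr_ge0 p; nra.
split; nra.
Qed.

Lemma hb_two_modes_rate_absurd {sg r a b : R} :
  0 < r <= 1 -> sg * (1 + r ^+ 2) = 2 * r -> b < r ^+ 2 ->
  r * `|1 + b - a * (1 - sg)| < r ^+ 2 + b ->
  r * `|1 + b - a * (1 + sg)| < r ^+ 2 + b -> False.
Proof.
case/andP=> r_gt0 r_le1 sg_r b_lt lt1 lt2.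
have {}lt1 : r * (1 + b - a * (1 - sg)) < r ^+ 2 + b.
  by apply: le_lt_trans lt1; rewrite ler_pM2l // ler_norm.
have {}lt2 : - (r * (1 + b - a * (1 + sg))) < r ^+ 2 + b.
  by apply: le_lt_trans lt2; rewrite -mulrN ler_pM2l // -normrN ler_norm.
have r2_ge0 := sqr_ge0 r.
have sg_ge0 : 0 <= sg by nra.
have sg_le1 : sg <= 1 by have := sqr_ge0 (1 - r); nra.
have sgr : sg * r * (1 + r ^+ 2) = 2 * r ^+ 2 by rewrite mulrAC sg_r expr2 mulrA.
have sgr_le1 : sg * r <= 1 by nra.
(* [(1 + sg)] times the first bound plus [(1 - sg)] times the second eliminates [a]. *)
have : sg * r * (1 + b) < r ^+ 2 + b.
  have : (1 + sg) * (r * (1 + b - a * (1 - sg))) +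
         (1 - sg) * (- (r * (1 + b - a * (1 + sg)))) = 2 * (sg * r * (1 + b)) by ring.
  have : (1 + sg) * (r * (1 + b - a * (1 - sg))) < (1 + sg) * (r ^+ 2 + b).
    by rewrite ltr_pM2l //; lra.
  have : (1 - sg) * (- (r * (1 + b - a * (1 + sg)))) <= (1 - sg) * (r ^+ 2 + b).
    by rewrite ler_wpM2l ?subr_ge0 // ltW.
  lra.
nra.
Qed.

End ComplexQuadratics.

(* [bgd_step S] is Young's optimal SOR relaxation parameter for a Jacobi
   iteration of spectral radius [sqrt S]; the optimal SOR rate is
   [bgd_step S - 1 = hb_rate S ^+ 2]. *)
Definition bgd_step {R : rcfType} (S : R) := 2 / (1 + Num.sqrt (1 - S)).
Definition hb_rate {R : rcfType} (S : R) := Num.sqrt S / (1 + Num.sqrt (1 - S)).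

Section Rates.
Context {R : rcfType} {S : R}.
Hypothesis S01 : 0 <= S <= 1.

Let S_ge0 : 0 <= S. Proof. by case/andP: S01. Qed.
Let S_le1 : S <= 1. Proof. by case/andP: S01. Qed.
Let c := Num.sqrt (1 - S).
Let c_ge0 : 0 <= c. Proof. exact: sqrtr_ge0. Qed.
Let c_sqr : c ^+ 2 = 1 - S. Proof. by rewrite sqr_sqrtr // subr_ge0. Qed.
Let s_sqr : Num.sqrt S ^+ 2 = S. Proof. exact: sqr_sqrtr. Qed.
Let rate_mul : hb_rate S * (1 + c) = Num.sqrt S.
Proof. by rewrite mulfVK // gt_eqF // ltr_pwDl. Qed.
Let step_mul : bgd_step S * (1 + c) = 2.
Proof. by rewrite mulfVK // gt_eqF // ltr_pwDl. Qed.
Let mulIc2 x y : x * (1 + c) ^+ 2 = y * (1 + c) ^+ 2 -> x = y.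
Proof. by apply: mulIf; rewrite expf_neq0 // gt_eqF // ltr_pwDl. Qed.

Lemma hb_rate_ge0 : 0 <= hb_rate S.
Proof. by rewrite divr_ge0 ?sqrtr_ge0 // addr_ge0. Qed.

Lemma hb_rate_gt0 : 0 < S -> 0 < hb_rate S.
Proof. by move=> S_gt0; rewrite divr_gt0 ?sqrtr_gt0 // ltr_pwDl. Qed.

Lemma hb_rate_le1 : hb_rate S <= 1.
Proof.
have s_le1 : Num.sqrt S <= 1 by rewrite -sqrtr1 ler_wsqrtr.
have := rate_mul; have := hb_rate_ge0; have := c_ge0; nra.
Qed.

Let sqr1c : (1 + c) ^+ 2 = 2 * (1 + c) - S.
Proof. by rewrite sqrrD c_sqr; ring. Qed.

Lemma hb_rate_sqrt : Num.sqrt S * (1 + hb_rate S ^+ 2) = 2 * hb_rate S.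
Proof.
apply: mulIc2.
have -> : Num.sqrt S * (1 + hb_rate S ^+ 2) * (1 + c) ^+ 2 =
  Num.sqrt S * ((1 + c) ^+ 2 + (hb_rate S * (1 + c)) ^+ 2) by ring.
have -> : 2 * hb_rate S * (1 + c) ^+ 2 = 2 * (hb_rate S * (1 + c)) * (1 + c) by ring.
by rewrite rate_mul s_sqr sqr1c; ring.
Qed.

Lemma bgd_step_ge1 : 1 <= bgd_step S.
Proof.
have c_le1 : c <= 1 by have := c_sqr; have := c_ge0; have := S_ge0; nra.
have := step_mul; have := c_ge0; nra.
Qed.

Lemma bgd_step_subr1 : bgd_step S - 1 = hb_rate S ^+ 2.
Proof.
apply: mulIc2.
have -> : (bgd_step S - 1) * (1 + c) ^+ 2 = bgd_step S * (1 + c) * (1 + c) - (1 + c) ^+ 2 by ring.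
by rewrite -exprMn rate_mul step_mul s_sqr sqr1c; ring.
Qed.

Lemma bgd_step_sqrM : bgd_step S ^+ 2 * S = 4 * (bgd_step S - 1).
Proof.
apply: mulIc2; rewrite bgd_step_subr1.
have -> : bgd_step S ^+ 2 * S * (1 + c) ^+ 2 = (bgd_step S * (1 + c)) ^+ 2 * S by ring.
have -> : 4 * hb_rate S ^+ 2 * (1 + c) ^+ 2 = 4 * (hb_rate S * (1 + c)) ^+ 2 by ring.
by rewrite step_mul rate_mul s_sqr; ring.
Qed.

End Rates.

Section BlockGradientField.
Context {K : fieldType} {n1 n2 : nat}.
Implicit Types (Bc : 'M[K]_(n2, n1)) (w mu : K).

Definition bgd_mx Bc w : 'M[K]_(n1 + n2) :=
  (1%:M - block_mx 0 0 (w *: Bc) w%:M) *m (1%:M - block_mx w%:M (w *: Bc^T) 0 0).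

Lemma bgd_mx_left_eigen {Bc w mu} (x1 : 'rV_n1) (x2 : 'rV_n2) :
  row_mx x1 x2 *m bgd_mx Bc w = mu *: row_mx x1 x2 ->
  let y1 := x1 - w *: (x2 *m Bc) in
  (1 - w) *: y1 = mu *: x1 /\ (1 - w) *: x2 - w *: (y1 *m Bc^T) = mu *: x2.
Proof.
move=> xM y1.
have M1 : row_mx x1 x2 *m (1%:M - block_mx 0 0 (w *: Bc) w%:M) = row_mx y1 ((1 - w) *: x2).
  rewrite mulmxBr mulmx1 mul_row_block !mulmx0 !add0r mul_mx_scalar -scalemxAr.
  by rewrite opp_row_mx add_row_mx scalerBl scale1r.
have M2 : row_mx y1 ((1 - w) *: x2) *m (1%:M - block_mx w%:M (w *: Bc^T) 0 0) =
    row_mx ((1 - w) *: y1) ((1 - w) *: x2 - w *: (y1 *m Bc^T)).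
  rewrite mulmxBr mulmx1 mul_row_block !mulmx0 !addr0 mul_mx_scalar -scalemxAr.
  by rewrite opp_row_mx add_row_mx [(1 - w) *: y1]scalerBl scale1r.
by move: xM; rewrite /bgd_mx mulmxA M1 M2 scale_row_mx => /eq_row_mx.
Qed.

Lemma bgd_eigen_quadratic {Bc w mu} {x1 : 'rV_n1} {x2 : 'rV_n2} :
  let y1 := x1 - w *: (x2 *m Bc) in
  (1 - w) *: y1 = mu *: x1 -> (1 - w) *: x2 - w *: (y1 *m Bc^T) = mu *: x2 ->
  (mu + w - 1) ^+ 2 *: y1 = (w ^+ 2 * mu) *: (y1 *m (Bc^T *m Bc)).
Proof.
move=> y1 E1 E2.
have wy1 : w *: (y1 *m Bc^T) = (1 - w - mu) *: x2 by rewrite scalerBl -E2 opprB addrC subrK.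
have wx2 : w *: (x2 *m Bc) = x1 - y1 by rewrite opprB addrC subrK.
have -> : (w ^+ 2 * mu) *: (y1 *m (Bc^T *m Bc)) = (w * mu) *: (w *: (y1 *m Bc^T) *m Bc).
  by rewrite -scalemxAl scalerA mulmxA; congr (_ *: _); ring.
rewrite wy1 -scalemxAl scalerA.
have -> : w * mu * (1 - w - mu) = mu * (1 - w - mu) * w by ring.
rewrite -scalerA wx2 [in RHS]scalerBr [mu * _]mulrC -[(_ * mu) *: x1]scalerA -E1.
by rewrite !scalerA -scalerBl; congr (_ *: _); ring.
Qed.

Lemma bgd_mx_eigenvalue {Bc w mu} : w != 0 -> mu != 0 ->
  eigenvalue (bgd_mx Bc w) mu ->
  exists2 kap, (kap == 0) || eigenvalue (Bc^T *m Bc) kap &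
    (mu + w - 1) ^+ 2 = w ^+ 2 * kap * mu.
Proof.
move=> w0 mu0 /eigenvalueP[x]; rewrite -[x]hsubmxK.
set x1 := lsubmx x; set x2 := rsubmx x => /bgd_mx_left_eigen[].
set y1 := x1 - _ => E1 E2 x0.
have [y10|y1n0] := eqVneq y1 0.
  have x10 : x1 = 0.
    by move/eqP: E1; rewrite y10 scaler0 eq_sym scaler_eq0 (negbTE mu0) => /eqP.
  have x2n0 : x2 != 0 by apply: contra_neq x0 => ->; rewrite x10 row_mx0.
  have /eqP : (1 - w - mu) *: x2 = 0 by rewrite scalerBl -E2 y10 mul0mx scaler0 subr0 subrr.
  rewrite scaler_eq0 (negbTE x2n0) orbF subr_eq0 => /eqP <-.
  by exists 0; rewrite ?eqxx //; ring.
have quad := bgd_eigen_quadratic E1 E2.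
exists ((mu + w - 1) ^+ 2 / (w ^+ 2 * mu)); last by field; rewrite w0 mu0.
apply/orP; right; apply/eigenvalueP; exists y1 => //.
by rewrite mulrC -scalerA quad scalerA mulVf ?scale1r // mulf_neq0 // expf_neq0.
Qed.

End BlockGradientField.

Section HeavyBall.
Context {R : realType} {m n : nat} {A : 'M[R]_(m, n)}.
Local Notation normc := (@ComplexField.Normc.normc R).

Lemma N_HB_eigenvalue {a b} {u : 'rV[R]_n} {lam} {mu : R[i]} :
  u != 0 -> u *m (A^T *m A) = lam *: u ->
  mu ^+ 2 - (1 + b - a * lam)%:C * mu + b%:C = 0 ->
  eigenvalue (cplx_mx (N_HB A a b)) mu.
Proof.
move=> u0 uA root; apply/eigenvalueP.
set p := 1 + b - a * lam in root; set cu := map_mx (real_complex R) u.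
have uP : u *m ((1 + b)%:M - a *: (A^T *m A)) = p *: u.
  by rewrite mulmxBr mul_mx_scalar -scalemxAr uA scalerA -scalerBl.
exists (row_mx ((mu - p%:C) *: cu) cu); last first.
  apply: contra_neq u0 => /(congr1 rsubmx); rewrite row_mxKr linear0 => /eqP.
  by rewrite map_mx_eq0 => /eqP.
rewrite /cplx_mx /N_HB map_block_mx mul_row_block map_mx0 mulmx0 add0r map_mx1 mulmx1 -!map_mxM.
rewrite uP mulmxN mul_mx_scalar -scaleNr !map_mxZ scale_row_mx scalerA; congr row_mx.
  congr (_ *: _); apply/eqP; rewrite eq_sym -subr_eq0 rmorphN opprK -root; apply/eqP; ring.
by rewrite scalerBl subrK.
Qed.

Lemma spec_rad_N_HB_ge {sg r a b : R} {u1 u2 : 'rV[R]_n} :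
  0 < r <= 1 -> sg * (1 + r ^+ 2) = 2 * r -> 0 <= b ->
  u1 != 0 -> u1 *m (A^T *m A) = (1 - sg) *: u1 ->
  u2 != 0 -> u2 *m (A^T *m A) = (1 + sg) *: u2 ->
  r <= spec_rad (N_HB A a b).
Proof.
move=> r01 sg_r b_ge0 u1n0 u1A u2n0 u2A; rewrite leNgt; apply/negP => rad_lt.
have roots_lt lam (u : 'rV_n) : u != 0 -> u *m (A^T *m A) = lam *: u ->
    forall mu : R[i], mu ^+ 2 - (1 + b - a * lam)%:C * mu + b%:C = 0 -> normc mu < r.
  move=> un0 uA mu root; apply: le_lt_trans rad_lt.
  exact: normc_le_spec_rad (N_HB_eigenvalue un0 uA root).
have r_gt0 : 0 < r by case/andP: r01.
have [b_lt lt1] := quadratic_roots_in_disk b_ge0 r_gt0 (roots_lt _ _ u1n0 u1A).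
have [_ lt2] := quadratic_roots_in_disk b_ge0 r_gt0 (roots_lt _ _ u2n0 u2A).
exact: hb_two_modes_rate_absurd r01 sg_r b_lt lt1 lt2.
Qed.

End HeavyBall.

Section OrthonormalBlocks.
Context {R : realType} {m n1 n2 : nat} {A1 : 'M[R]_(m, n1)} {A2 : 'M[R]_(m, n2)}.
Hypotheses (A1_orth : A1^T *m A1 = 1%:M) (A2_orth : A2^T *m A2 = 1%:M).
Local Notation B := (A2^T *m A1).
Local Notation C := (B^T *m B).

Lemma trmx_cross_gram : A1^T *m A2 = B^T.
Proof. by rewrite trmx_mul trmxK. Qed.

(* [v A1^T - v B^T A2^T] has squared norm [|v|^2 - |v B^T|^2]. *)
Lemma cross_gram_eigen_bound {v : 'rV[R]_n1} {s} :
  v != 0 -> v *m C = s *: v -> 0 <= s <= 1.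
Proof.
move=> v0 vC; set y := v *m B^T.
have yy : y *m y^T = s *: (v *m v^T) by rewrite trmx_mul trmxK mulmxA -(mulmxA v) vC -scalemxAl.
have xx : (v *m A1^T - y *m A2^T) *m (v *m A1^T - y *m A2^T)^T = v *m v^T - y *m y^T.
  rewrite linearB /= !trmx_mul !trmxK mulmxBl !mulmxBr !mulmxA.
  rewrite -!(mulmxA _ A1^T) -!(mulmxA _ A2^T) A1_orth A2_orth trmx_cross_gram !mulmx1.
  by rewrite subrr subr0.
have := dotmx_self_ge0 (v *m A1^T - y *m A2^T); rewrite xx yy.
have := dotmx_self_ge0 y; rewrite yy.
have : 0 < (v *m v^T) 0 0 by rewrite lt_def dotmx_self_eq0 v0 dotmx_self_ge0.
rewrite !mxE; nra.
Qed.

Lemma cross_gram_top_eigen : exists S : R, [/\ 0 <= S <= 1,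
  forall kap, eigenvalue (cplx_mx C) kap ->
    kap = (complex.Re kap)%:C /\ 0 <= complex.Re kap <= S &
  0 < S -> exists2 v : 'rV[R]_n1, v != 0 & v *m C = S *: v].
Proof.
have C_sym : C^T = C by rewrite trmx_mul trmxK.
have eigen_real kap : eigenvalue (cplx_mx C) kap ->
    kap = (complex.Re kap)%:C /\ 0 <= complex.Re kap <= 1.
  case/(symmetric_eigenvalue_real C_sym) => kap_real [v v0 vC].
  by have /andP[-> ->] := cross_gram_eigen_bound v0 vC.
have [[l0 Cl0]|no_eig] := pselect (exists l, eigenvalue (cplx_mx C) l); last first.
  by exists 0; split; rewrite ?lexx ?ler01 ?ltxx // => kap Ckap; case: no_eig; exists kap.
have [l Cl l_max] := eigenvalue_argmax (@complex.Re R) Cl0.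
have [_ [v v0 vC]] := symmetric_eigenvalue_real C_sym Cl.
exists (complex.Re l); split; [exact: (eigen_real l Cl).2 | | by exists v].
by move=> kap Ckap; have [-> /andP[-> _]] := eigen_real kap Ckap; rewrite /= l_max.
Qed.

Lemma gram_row_mx_eigen {v : 'rV[R]_n1} {S} e :
  0 < S -> v != 0 -> v *m C = S *: v -> e ^+ 2 = 1 ->
  let u := row_mx (Num.sqrt S *: v) (e *: (v *m B^T)) in
  u != 0 /\ u *m ((row_mx A1 A2)^T *m row_mx A1 A2) = (1 + e * Num.sqrt S) *: u.
Proof.
move=> S_gt0 v0 vC e2 u; split.
  apply: contra_neq v0 => /(congr1 lsubmx); rewrite row_mxKl linear0 => /eqP.
  by rewrite scaler_eq0 sqrtr_eq0 leNgt S_gt0 => /eqP.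
rewrite tr_row_mx mul_col_row A1_orth A2_orth trmx_cross_gram mul_row_block !mulmx1.
rewrite -!scalemxAl -(mulmxA v) vC /u scale_row_mx !scalerA -!scalerDl.
congr row_mx; congr (_ *: _); last by rewrite mulrDl mul1r mulrAC -expr2 e2 mul1r addrC.
by rewrite mulrDl mul1r -mulrA -expr2 sqr_sqrtr // ltW.
Qed.

Lemma cplx_M_BGD g :
  cplx_mx (M_BGD A1 A2 g g) = bgd_mx (map_mx (real_complex R) B) g%:C.
Proof.
rewrite /M_BGD /cplx_mx /bgd_mx A1_orth A2_orth trmx_cross_gram !scalemx1 map_mxM.
by rewrite !map_mxB !map_mx1 !map_block_mx !map_mx0 !map_mxZ !map_scalar_mx map_trmx.
Qed.

Lemma spec_rad_M_BGD_le {S om : R} : 1 <= om -> om ^+ 2 * S <= 4 * (om - 1) ->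
  (forall kap, eigenvalue (cplx_mx C) kap ->
    kap = (complex.Re kap)%:C /\ 0 <= complex.Re kap <= S) ->
  spec_rad (M_BGD A1 A2 om om) <= om - 1.
Proof.
move=> om_ge1 omS C_eig; apply: spec_rad_le => [|mu]; first by rewrite subr_ge0.
rewrite cplx_M_BGD => Mmu.
have [->|mu0] := eqVneq mu 0; first by rewrite ComplexField.Normc.normc0 subr_ge0.
have om0 : om%:C != 0.
  by rewrite -(rmorph0 (real_complex R)) (inj_eq (@complexI _)); apply/eqP; lra.
have [kap kap_eig quad] := bgd_mx_eigenvalue om0 mu0 Mmu.
have [kap_real kap_ge0 kap_le] :
    [/\ kap = (complex.Re kap)%:C, 0 <= complex.Re kap & om ^+ 2 * complex.Re kap <= 4 * (om - 1)].
  case/orP: kap_eig => [/eqP->|]; first by split; rewrite /= ?mulr0 ?lexx //; lra.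
  rewrite map_trmx -map_mxM -[map_mx _ _]/(cplx_mx C) => /C_eig[-> /andP[k0 kS]].
  split=> //.
  by apply: le_trans omS; rewrite ler_wpM2l // sqr_ge0.
apply: (@normc_le_shift_sqr _ _ (om ^+ 2 * complex.Re kap)).
  by rewrite kap_le mulr_ge0 ?sqr_ge0.
by rewrite rmorphB rmorph1 addrA quad {1}kap_real rmorphM rmorphXn; ring.
Qed.

Lemma spec_rad_N_HB_cross_ge {S} a b : 0 <= S <= 1 -> 0 <= b ->
  (0 < S -> exists2 v : 'rV[R]_n1, v != 0 & v *m C = S *: v) ->
  hb_rate S <= spec_rad (N_HB (row_mx A1 A2) a b).
Proof.
move=> S01 b_ge0 C_top; have [S0|S_gt0] := eqVneq S 0.
  by rewrite /hb_rate S0 sqrtr0 mul0r spec_rad_ge0.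
have {}S_gt0 : 0 < S by rewrite lt_def S_gt0; case/andP: S01.
have [v v0 vC] := C_top S_gt0.
have [u1n0 u1A] := gram_row_mx_eigen (-1) S_gt0 v0 vC ltac:(by rewrite sqrrN expr1n).
have [u2n0 u2A] := gram_row_mx_eigen 1 S_gt0 v0 vC (expr1n _ 2).
rewrite mulN1r in u1A; rewrite mul1r in u2A.
have r01 : 0 < hb_rate S <= 1 by rewrite hb_rate_gt0 ?hb_rate_le1.
exact: spec_rad_N_HB_ge r01 (hb_rate_sqrt S01) b_ge0 u1n0 u1A u2n0 u2A.
Qed.

End OrthonormalBlocks.

Lemma rho_BGD_star_le {R : realType} {m n1 n2} (A1 : 'M[R]_(m, n1)) (A2 : 'M[R]_(m, n2)) {g1 g2} :
  0 < g1 -> 0 < g2 -> rho_BGD_star A1 A2 <= spec_rad (M_BGD A1 A2 g1 g2).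
Proof.
move=> g1_gt0 g2_gt0; apply: ge_inf; last by exists g1, g2.
by exists 0 => _ [? [? [_ [_ ->]]]]; exact: spec_rad_ge0.
Qed.

Lemma rho_HB_star_ge {R : realType} {m n} (A : 'M[R]_(m, n)) x :
  (forall a b, 0 < a -> 0 <= b -> x <= spec_rad (N_HB A a b)) -> x <= rho_HB_star A.
Proof.
move=> x_le; apply: lb_le_inf; first by exists (spec_rad (N_HB A 1 0)), 1, 0; rewrite ltr01 lexx.
by move=> _ [a [b [a_gt0 [b_ge0 ->]]]]; exact: x_le.
Qed.

Theorem theorem1 (R : realType) (m n1 n2 : nat)
  (A1 : 'M[R]_(m, n1)) (A2 : 'M[R]_(m, n2)) :
  \rank (row_mx A1 A2) = (n1 + n2)%N ->
  A1^T *m A1 = 1%:M ->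
  A2^T *m A2 = 1%:M ->
  A2^T *m A1 != 0 ->
  rho_BGD_star A1 A2 <= (rho_HB_star (row_mx A1 A2)) ^+ 2.
Proof.
move=> _ A1_orth A2_orth _.
have [S [S01 C_eig C_top]] := cross_gram_top_eigen A1_orth A2_orth.
have om_gt0 : 0 < bgd_step S by apply: lt_le_trans (bgd_step_ge1 S01).
have bgd_le : rho_BGD_star A1 A2 <= hb_rate S ^+ 2.
  rewrite -(bgd_step_subr1 S01); apply: le_trans (rho_BGD_star_le A1 A2 om_gt0 om_gt0) _.
  have omS : bgd_step S ^+ 2 * S <= 4 * (bgd_step S - 1) by rewrite bgd_step_sqrM.
  by apply: (spec_rad_M_BGD_le A1_orth A2_orth _ omS C_eig); apply: bgd_step_ge1.
have hb_ge : hb_rate S <= rho_HB_star (row_mx A1 A2).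
  apply: rho_HB_star_ge => a b _ b_ge0.
  exact (spec_rad_N_HB_cross_ge A1_orth A2_orth a b S01 b_ge0 C_top).
by apply: le_trans bgd_le _; rewrite !expr2 ler_pM ?hb_rate_ge0.
Qed.
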